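(* Let $V\subseteq\mathcal V$ be finite and $\mathbb E,\mathbb F\in\mathit{NProg}(V)$. (1) $\mathbb E\le_T^e\mathbb F$ implies $\mathbb E\le_T^p\mathbb F$, but the converse fails in general. (2) $\mathbb E\le_P^e\mathbb F$ implies $\mathbb E\le_P^p\mathbb F$, but the converse fails in general.
   Context: $\mathcal V$ is a countably infinite set of qubit variables; $\mathcal H_V=\bigotimes_{q\in V}\mathcal H_q$. $\mathcal D(\mathcal H)$: partial density operators; $\mathcal P(\mathcal H)$: effects; $\mathcal S(\mathcal H)$: projectors. $\mathit{DProg}(V)$: completely positive trace-nonincreasing super-operators on $\mathcal L(\mathcal H_V)$; $\mathit{NProg}(V)$: nonempty convex closed subsets of $\mathit{DProg}(V)$. Operators/super-operators on subsystems are implicitly extended by tensoring with identities. For finite $W$ and $M,N\in\mathcal P(\mathcal H_W)$: $\mathbb E\models_{tot}(\{M\},\{N\})$ iff for all finite $X\supseteq V\cup W$ and $\rho\in\mathcal D(\mathcal H_X)$, ${\rm tr}(M\rho)\le\inf_{\mathcal E\in\mathbb E}{\rm tr}(N\mathcal E(\rho))$; $\mathbb E\models_{par}(\{M\},\{N\})$ iff for all such $X,\rho$, ${\rm tr}(M\rho)\le\inf_{\mathcal E\in\mathbb E}[{\rm tr}(N\mathcal E(\rho))+{\rm tr}(\rho)-{\rm tr}(\mathcal E(\rho))]$. $\mathbb E\le_T^e\mathbb F$ iff for every finite $W$ and all $M,N\in\mathcal P(\mathcal H_W)$, $\mathbb E\models_{tot}(\{M\},\{N\})\Rightarrow\mathbb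 F\models_{tot}(\{M\},\{N\})$; $\le_T^p$ is the same with $M,N$ restricted to projectors $\mathcal S(\mathcal H_W)$; $\le_P^e,\le_P^p$ likewise with $\models_{par}$. *)

From mathcomp Require Import all_boot all_order all_algebra.
From mathcomp Require Import finmap.
From mathcomp Require Import reals complex.
Set Implicit Arguments. Unset Strict Implicit. Unset Printing Implicit Defensive.
Import Order.TTheory GRing.Theory Num.Theory.
Local Open Scope ring_scope.
Local Open Scope complex_scope.

(* Qubit variables: the countably infinite set nat.  A finite set of
   variables is a {fset nat}.  The computational basis of
   H_X = (x)_{q in X} C^2 is indexed by assignments X -> bool. *)

Section QDefs.
Variable R : realType.
Local Notation C := R[i].

Definition OpT (T : finType) := T -> T -> C.

Definition trT (T : finType) (A : OpT T) : C := \sum_(b : T) A b b.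
Definition mulT (T : finType) (A B : OpT T) : OpT T :=
  fun i j => \sum_(k : T) A i k * B k j.
Definition adjT (T : finType) (A : OpT T) : OpT T := fun i j => (A j i)^*.
Definition idT (T : finType) : OpT T := fun i j => (i == j)%:R.

Definition psdT (T : finType) (A : OpT T) : Prop :=
  forall v : T -> C, 0 <= \sum_(i : T) \sum_(j : T) (v i)^* * A i j * v j.

Definition basis (X : {fset nat}) := {ffun X -> bool}.
Definition Op (X : {fset nat}) := OpT (basis X).

Definition pdo (X : {fset nat}) (rho : Op X) : Prop :=
  psdT rho /\ trT rho <= 1.
Definition effect (X : {fset nat}) (M : Op X) : Prop :=
  psdT M /\ psdT (fun i j => idT i j - M i j).
Definition projector (X : {fset nat}) (P : Op X) : Prop :=
  mulT P P = P /\ adjT P = P.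

Definition res (X W : {fset nat}) (b : basis X) : basis W :=
  [ffun w : W => if (insub (val w) : option X) is Some x then b x else false].
Arguments res {X} W b.

Definition glue (V Y X : {fset nat}) (i : basis V) (c : basis Y) : basis X :=
  [ffun x : X => if (insub (val x) : option V) is Some v then i v
                 else if (insub (val x) : option Y) is Some y then c y
                 else false].
Arguments glue {V Y} X i c.

(* cylindric extension M (x) I_{X \ W} of an operator on H_W to H_X (W <= X) *)
Definition extO (W X : {fset nat}) (M : Op W) : Op X :=
  fun b b' => M (res W b) (res W b') *
              (res (X `\` W)%fset b == res (X `\` W)%fset b')%:R.
Arguments extO {W} X M.

Definition SO (V : {fset nat}) := Op V -> Op V.

Definition linearSO (V : {fset nat}) (E : SO V) : Prop :=
  forall (a : C) (A B : Op V),
    E (fun i j => a * A i j + B i j) = (fun i j => a * E A i j + E B i j).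

(* id_n (x) E acting on L(C^n (x) H_V) *)
Definition amplSO (n : nat) (V : {fset nat}) (E : SO V) :
    OpT (('I_n * basis V)%type) -> OpT (('I_n * basis V)%type) :=
  fun rho p q => E (fun i j => rho (p.1, i) (q.1, j)) p.2 q.2.

Definition completely_positive (V : {fset nat}) (E : SO V) : Prop :=
  forall (n : nat) (rho : OpT (('I_n * basis V)%type)),
    psdT rho -> psdT (amplSO E rho).

Definition trace_nonincreasing (V : {fset nat}) (E : SO V) : Prop :=
  forall rho : Op V, psdT rho -> trT (E rho) <= trT rho.

Definition DProg (V : {fset nat}) (E : SO V) : Prop :=
  [/\ linearSO E, completely_positive E & trace_nonincreasing E].

Definition cconv (x : nat -> C) (l : C) : Prop :=
  forall e : R, 0 < e -> exists N : nat, forall n : nat, (N <= n)%N ->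
    `|x n - l| < e%:C.

Definition convexSO (V : {fset nat}) (S : SO V -> Prop) : Prop :=
  forall (E F : SO V) (p : R), S E -> S F -> 0 <= p <= 1 ->
    S (fun A i j => p%:C * E A i j + (1 - p)%:C * F A i j).

Definition closedSO (V : {fset nat}) (S : SO V -> Prop) : Prop :=
  forall (En : nat -> SO V) (E : SO V), (forall n, S (En n)) ->
    (forall (A : Op V) (i j : basis V), cconv (fun n => En n A i j) (E A i j)) ->
    S E.

Definition NProg (V : {fset nat}) (S : SO V -> Prop) : Prop :=
  [/\ exists E, S E, forall E, S E -> DProg E, convexSO S & closedSO S].

(* E (x) I_{X \ V} : the extension of a super-operator on L(H_V) to L(H_X) *)
Definition extSO (V X : {fset nat}) (E : SO V) : SO X :=
  fun rho b b' =>
    E (fun i j => rho (glue X i (res (X `\` V)%fset b)) (glue X j (res (X `\` V)%fset b')))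
      (res V b) (res V b').
Arguments extSO {V} X E.

(* tr(M rho) <= inf_{E in S} tr(N E(rho)) is written as: for all E in S,
   tr(M rho) <= tr(N E(rho)) (definition of the infimum as greatest lower bound). *)
Definition sat_tot (V : {fset nat}) (S : SO V -> Prop) (W : {fset nat})
    (M N : Op W) : Prop :=
  forall X : {fset nat}, (V `|` W `<=` X)%fset ->
  forall rho : Op X, pdo rho ->
  forall E : SO V, S E ->
    trT (mulT (extO X M) rho) <= trT (mulT (extO X N) (extSO X E rho)).

Definition sat_par (V : {fset nat}) (S : SO V -> Prop) (W : {fset nat})
    (M N : Op W) : Prop :=
  forall X : {fset nat}, (V `|` W `<=` X)%fset ->
  forall rho : Op X, pdo rho ->
  forall E : SO V, S E ->
    trT (mulT (extO X M) rho) <=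
      trT (mulT (extO X N) (extSO X E rho)) + trT rho - trT (extSO X E rho).

Definition le_Te (V : {fset nat}) (S T : SO V -> Prop) : Prop :=
  forall (W : {fset nat}) (M N : Op W), effect M -> effect N ->
    sat_tot S M N -> sat_tot T M N.
Definition le_Tp (V : {fset nat}) (S T : SO V -> Prop) : Prop :=
  forall (W : {fset nat}) (M N : Op W), projector M -> projector N ->
    sat_tot S M N -> sat_tot T M N.
Definition le_Pe (V : {fset nat}) (S T : SO V -> Prop) : Prop :=
  forall (W : {fset nat}) (M N : Op W), effect M -> effect N ->
    sat_par S M N -> sat_par T M N.
Definition le_Pp (V : {fset nat}) (S T : SO V -> Prop) : Prop :=
  forall (W : {fset nat}) (M N : Op W), projector M -> projector N ->
    sat_par S M N -> sat_par T M N.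

End QDefs.

From mathcomp Require Import all_boot all_order all_algebra.
From mathcomp Require Import finmap.
From mathcomp Require Import reals complex boolp ring.
Set Implicit Arguments. Unset Strict Implicit. Unset Printing Implicit Defensive.
Import Order.TTheory GRing.Theory Num.Theory.
Local Open Scope ring_scope.

(* Every projector is an effect, which gives the implications.  The converses
   already fail for the programs {c id} with 0 < c < 1.  Sandwiching a state rho
   by a projector P turns the total-correctness formula {P} c id {Q} into
   tr(P rho) <= c tr(Q P rho P) <= c tr(P rho), so tr(P rho) = 0 and {c id}
   refines the aborting program {0} on projector specifications; the effect
   specification {c I} c id {I} separates them.  In partial correctness
   {P} c id {Q} forces tr((I - Q) P rho P) <= 0 for all states rho, hence
   (I - Q) P = 0, i.e. P <= Q, which is {P} id {Q}; the effect specification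
   {(1 - c) I} c id {0} separates {c id} from {id}. *)

Section Operators.
Variable R : realType.
Local Notation C := R[i].
Variable T : finType.
Implicit Types (A B D K P Q rho : OpT R T) (c : C).
Local Notation I := (@idT R T).

Definition subT A B : OpT R T := fun i j => A i j - B i j.
Definition scaleT c A : OpT R T := fun i j => c * A i j.
Definition zeroT : OpT R T := fun _ _ => 0.
Definition ketbraT (b : T) : OpT R T := fun i j => (i == b)%:R * (j == b)%:R.
Definition projT P := mulT P P = P /\ adjT P = P.
Definition pdoT rho := psdT rho /\ trT rho <= 1.

Lemma sum_deltal (b : T) (F : T -> C) : \sum_(k : T) (k == b)%:R * F k = F b.
Proof.
rewrite (bigD1 b) //= eqxx mul1r big1 ?addr0 // => k /negbTE ->.
by rewrite mul0r.
Qed.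

Lemma sum_deltar (b : T) (F : T -> C) : \sum_(k : T) F k * (k == b)%:R = F b.
Proof. by rewrite -(sum_deltal b F); apply: eq_bigr => k _; rewrite mulrC. Qed.

Lemma mulTA A B D : mulT (mulT A B) D = mulT A (mulT B D).
Proof.
apply: funext => i; apply: funext => j; rewrite /mulT.
under eq_bigr do rewrite big_distrl /=.
rewrite exchange_big /=; apply: eq_bigr => k _.
by rewrite big_distrr /=; apply: eq_bigr => l _; rewrite mulrA.
Qed.

Lemma mulTBl A B D : mulT (subT A B) D = subT (mulT A D) (mulT B D).
Proof.
apply: funext => i; apply: funext => j; rewrite /mulT /subT -sumrB.
by apply: eq_bigr => k _; rewrite mulrBl.
Qed.

Lemma mulTBr A B D : mulT A (subT B D) = subT (mulT A B) (mulT A D).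
Proof.
apply: funext => i; apply: funext => j; rewrite /mulT /subT -sumrB.
by apply: eq_bigr => k _; rewrite mulrBr.
Qed.

Lemma mul1T A : mulT I A = A.
Proof.
apply: funext => i; apply: funext => j; rewrite /mulT /idT -(sum_deltal i (A^~ j)).
by apply: eq_bigr => k _; rewrite eq_sym.
Qed.

Lemma mulT1 A : mulT A I = A.
Proof. by apply: funext => i; apply: funext => j; rewrite /mulT sum_deltar. Qed.

Lemma mulTZl c A B : mulT (scaleT c A) B = scaleT c (mulT A B).
Proof.
apply: funext => i; apply: funext => j; rewrite /mulT /scaleT big_distrr /=.
by apply: eq_bigr => k _; rewrite mulrA.
Qed.

Lemma mulTZr c A B : mulT A (scaleT c B) = scaleT c (mulT A B).
Proof.
apply: funext => i; apply: funext => j; rewrite /mulT /scaleT big_distrr /=.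
by apply: eq_bigr => k _; rewrite mulrCA.
Qed.

Lemma subTT A : subT A A = zeroT.
Proof. by apply: funext => i; apply: funext => j; rewrite /subT subrr. Qed.

Lemma subT0 A : subT A zeroT = A.
Proof. by apply: funext => i; apply: funext => j; rewrite /subT subr0. Qed.

Lemma scale1T A : scaleT 1 A = A.
Proof. by apply: funext => i; apply: funext => j; rewrite /scaleT mul1r. Qed.

Lemma trTB A B : trT (subT A B) = trT A - trT B.
Proof. by rewrite /trT /subT sumrB. Qed.

Lemma trTZ c A : trT (scaleT c A) = c * trT A.
Proof. by rewrite /trT /scaleT big_distrr. Qed.

Lemma trT_mulC A B : trT (mulT A B) = trT (mulT B A).
Proof.
rewrite /trT /mulT exchange_big /=.
by apply: eq_bigr => i _; apply: eq_bigr => k _; rewrite mulrC.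
Qed.

Lemma adjT_mul A B : adjT (mulT A B) = mulT (adjT B) (adjT A).
Proof.
apply: funext => i; apply: funext => j; rewrite /adjT /mulT rmorph_sum.
by apply: eq_bigr => k _; rewrite rmorphM mulrC.
Qed.

Lemma adjTB A B : adjT (subT A B) = subT (adjT A) (adjT B).
Proof. by apply: funext => i; apply: funext => j; rewrite /adjT /subT rmorphB. Qed.

Lemma adjT1 : adjT I = I.
Proof.
by apply: funext => i; apply: funext => j; rewrite /adjT /idT conjc_nat eq_sym.
Qed.

Lemma trT_ketbra (b : T) : trT (ketbraT b) = 1.
Proof. by rewrite /trT /ketbraT sum_deltal eqxx. Qed.

Lemma trT_mul_ketbra A (b : T) : trT (mulT A (ketbraT b)) = A b b.
Proof.
rewrite /trT /mulT /ketbraT.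
transitivity (\sum_i (i == b)%:R * A i b); last exact: sum_deltal.
apply: eq_bigr => i _; rewrite -(sum_deltar b (A i)).
by rewrite mulr_sumr; apply: eq_bigr => k _; ring.
Qed.

Lemma psdT_diag_ge0 A (b : T) : psdT A -> 0 <= A b b.
Proof.
move=> /(_ (fun i => (i == b)%:R)); congr (_ <= _).
rewrite -(sum_deltal b (A^~ b)); apply: eq_bigr => i _.
rewrite conjC_nat -(sum_deltar b (A i)) mulr_sumr.
by apply: eq_bigr => j _; rewrite mulrA.
Qed.

Lemma trT_psd_ge0 A : psdT A -> 0 <= trT A.
Proof. by move=> hA; apply: sumr_ge0 => b _; exact: psdT_diag_ge0. Qed.

Lemma psdT1 : psdT I.
Proof.
move=> v; apply: sumr_ge0 => i _; rewrite (bigD1 i) //= big1 ?addr0.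
  by rewrite /idT eqxx mulr1 mulrC mul_conjC_ge0.
by move=> j /negbTE; rewrite /idT eq_sym => ->; rewrite mulr0 mul0r.
Qed.

Lemma psdTZ c A : 0 <= c -> psdT A -> psdT (scaleT c A).
Proof.
move=> c_ge0 hA v; rewrite /scaleT.
have -> : \sum_i \sum_j (v i)^* * (c * A i j) * v j =
          c * \sum_i \sum_j (v i)^* * A i j * v j.
  rewrite mulr_sumr; apply: eq_bigr => i _; rewrite mulr_sumr.
  by apply: eq_bigr => j _; ring.
exact: mulr_ge0 (hA v).
Qed.

Lemma psdT_conj rho L : psdT rho -> psdT (mulT (adjT L) (mulT rho L)).
Proof.
move=> hr v; have := hr (fun k => \sum_j L k j * v j); congr (_ <= _).
rewrite /adjT /mulT.
transitivity (\sum_k \sum_l \sum_i \sum_j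
                (v i)^* * (L k i)^* * rho k l * (L l j * v j)).
  apply: eq_bigr => k _; apply: eq_bigr => l _.
  rewrite rmorph_sum !mulr_suml; apply: eq_bigr => i _.
  by rewrite mulr_sumr; apply: eq_bigr => j _; rewrite rmorphM; ring.
transitivity (\sum_i \sum_j \sum_k \sum_l
                (v i)^* * (L k i)^* * rho k l * (L l j * v j)); last first.
  apply: eq_bigr => i _; apply: eq_bigr => j _.
  rewrite mulr_sumr mulr_suml; apply: eq_bigr => k _.
  rewrite !mulr_sumr mulr_suml; apply: eq_bigr => l _; ring.
under eq_bigr do rewrite exchange_big /=.
rewrite exchange_big /=; apply: eq_bigr => i _.
by under eq_bigr do rewrite exchange_big /=; rewrite exchange_big.
Qed.

Lemma projT_psd P : projT P -> psdT P.
Proof. by case=> PP Padj; have := psdT_conj P psdT1; rewrite mul1T Padj PP. Qed.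

Lemma projT_ketbra (b : T) : projT (ketbraT b).
Proof.
split; apply: funext => i; apply: funext => j; rewrite /ketbraT.
  rewrite /mulT -(sum_deltal b (fun=> (i == b)%:R * (j == b)%:R)).
  by apply: eq_bigr => k _; case: (k == b) => /=; ring.
by rewrite /adjT rmorphM !rmorph_nat mulrC.
Qed.

Lemma pdoT_ketbra (b : T) : pdoT (ketbraT b).
Proof. by split; [exact/projT_psd/projT_ketbra | rewrite trT_ketbra]. Qed.

Lemma projT_compl P : projT P -> projT (subT I P).
Proof.
case=> PP Padj; split; last by rewrite adjTB adjT1 Padj.
by rewrite mulTBl mul1T !mulTBr mulT1 PP subTT subT0.
Qed.

Lemma psdT_sandwich P rho : projT P -> psdT rho -> psdT (mulT P (mulT rho P)).
Proof. by case=> _ Padj /(psdT_conj P); rewrite Padj. Qed.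

Lemma trT_sandwich P rho : projT P -> trT (mulT P (mulT rho P)) = trT (mulT P rho).
Proof. by case=> PP _; rewrite trT_mulC mulTA PP trT_mulC. Qed.

Lemma projT_trT_ge0 P rho : projT P -> psdT rho -> 0 <= trT (mulT P rho).
Proof.
by move=> hP hr; rewrite -trT_sandwich //; exact/trT_psd_ge0/psdT_sandwich.
Qed.

Lemma projT_trT_le P rho : projT P -> psdT rho -> trT (mulT P rho) <= trT rho.
Proof.
move=> hP /(projT_trT_ge0 (projT_compl hP)).
by rewrite mulTBl mul1T trTB subr_ge0.
Qed.

Lemma pdoT_sandwich P rho : projT P -> pdoT rho -> pdoT (mulT P (mulT rho P)).
Proof.
move=> hP [hr tr_le1]; split; first exact: psdT_sandwich.
by rewrite trT_sandwich //; exact: le_trans (projT_trT_le hP hr) tr_le1.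
Qed.

Lemma gram_diag_eq0 K (b : T) : mulT (adjT K) K b b = 0 -> forall i, K i b = 0.
Proof.
rewrite /mulT /adjT => sum_eq0 i.
have term_ge0 k : 0 <= (K k b)^* * K k b by rewrite mulrC mul_conjC_ge0.
have /eqP := psumr_eq0P (fun k _ => term_ge0 k) sum_eq0 (i := i) isT.
by rewrite mulrC mul_conjC_eq0 => /eqP.
Qed.

Lemma projT_absorb P Q : projT P -> projT Q ->
  (forall b, trT (mulT P (mulT (ketbraT b) P)) <=
             trT (mulT Q (mulT P (mulT (ketbraT b) P)))) ->
  mulT Q P = P.
Proof.
move=> hP hQ hPQ; have [PP Padj] := hP.
have hA := projT_compl hQ; have [AA Aadj] := hA.
set A := subT I Q in hA AA Aadj; set K := mulT A P.
(* The hypothesis at b says that the b-th diagonal entry of the Gram matrix of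
   (I - Q) P is nonpositive. *)
have gramE b : mulT (adjT K) K b b = trT (mulT A (mulT P (mulT (ketbraT b) P))).
  rewrite -!mulTA trT_mulC -mulTA trT_mul_ketbra adjT_mul Padj Aadj.
  by rewrite !mulTA -(mulTA A) AA.
have K0 i b : K i b = 0.
  apply: gram_diag_eq0; rewrite gramE; apply: le_anti; apply/andP; split.
    by rewrite /A mulTBl mul1T trTB subr_le0.
  exact/projT_trT_ge0/psdT_sandwich/projT_psd/projT_ketbra.
apply: funext => i; apply: funext => b; apply/eqP; rewrite eq_sym -subr_eq0.
by have := K0 i b; rewrite /K /A mulTBl mul1T /subT => ->.
Qed.

Lemma projT_trT_mono P Q rho : projT P -> projT Q -> mulT Q P = P -> psdT rho ->
  trT (mulT P rho) <= trT (mulT Q rho).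
Proof.
move=> [PP Padj] [QQ Qadj] QP hr.
have PQ : mulT P Q = P by have := congr1 (@adjT R T) QP; rewrite adjT_mul Qadj Padj.
have hQP : projT (subT Q P).
  split; last by rewrite adjTB Qadj Padj.
  by rewrite mulTBl !mulTBr QQ QP PQ PP subTT subT0.
by have := projT_trT_ge0 hQP hr; rewrite mulTBl trTB subr_ge0.
Qed.

End Operators.

Section Registers.
Local Open Scope fset_scope.
Variable R : realType.

Lemma resE (W X : {fset nat}) (b : basis X) (w : W) (x : X) :
  val w = val x -> res W b w = b x.
Proof.
move=> wx; rewrite /res ffunE; case: insubP => [x' _ x'x|]; last by rewrite wx (valP x).
by congr (b _); apply: val_inj; rewrite x'x wx.
Qed.

Lemma glueEl (W Y X : {fset nat}) (i : basis W) (c : basis Y) (x : X) (w : W) :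
  val x = val w -> glue X i c x = i w.
Proof.
move=> xw; rewrite /glue ffunE; case: insubP => [w' _ w'w|]; last by rewrite xw (valP w).
by congr (i _); apply: val_inj; rewrite w'w xw.
Qed.

Lemma glueEr (W Y X : {fset nat}) (i : basis W) (c : basis Y) (x : X) (y : Y) :
  val x = val y -> val x \notin W -> glue X i c x = c y.
Proof.
move=> xy xW; rewrite /glue ffunE.
case: insubP => [w' w'W _|_]; first by rewrite w'W in xW.
case: insubP => [y' _ y'y|]; last by rewrite xy (valP y).
by congr (c _); apply: val_inj; rewrite y'y xy.
Qed.

Variables W X : {fset nat}.
Local Notation D := (X `\` W).
Local Notation ext A := (@extO R W X A).

Lemma glue_res (b : basis X) : glue X (res W b) (res D b) = b.
Proof.
apply/ffunP => x; have [xW | xW] := boolP (val x \in W).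
  by rewrite (glueEl _ _ (w := [` xW])) // (resE _ (x := x)).
have xD : val x \in D by rewrite in_fsetD xW (valP x).
by rewrite (glueEr _ _ (y := [` xD])) // (resE _ (x := x)).
Qed.

Lemma extO1 : ext (@idT R (basis W)) = @idT R (basis X).
Proof.
apply: funext => b; apply: funext => b'; rewrite /extO /idT.
have [<-|bb'] := eqVneq b b'; first by rewrite !eqxx mulr1.
have : ~~ ((res W b == res W b') && (res D b == res D b')).
  apply: contra bb' => /andP [/eqP eW /eqP eD].
  by rewrite -(glue_res b) eW eD glue_res.
by case/nandP => /negbTE ->; rewrite ?mul0r ?mulr0.
Qed.

Lemma extOZ c (A : Op R W) : ext (scaleT c A) = scaleT c (ext A).
Proof. by apply: funext => b; apply: funext => b'; rewrite /extO /scaleT mulrA. Qed.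

Lemma adjT_extO (A : Op R W) : adjT (ext A) = ext (adjT A).
Proof.
apply: funext => b; apply: funext => b'; rewrite /adjT /extO rmorphM rmorph_nat.
by rewrite eq_sym.
Qed.

Lemma extSO_scaleT c (rho : Op R X) :
  @extSO R W X (scaleT c) rho = scaleT c rho.
Proof. by apply: funext => b; apply: funext => b'; rewrite /extSO /scaleT !glue_res. Qed.

Hypothesis WX : W `<=` X.

Lemma res_glue_l (i : basis W) (c : basis D) : res W (glue X i c) = i.
Proof.
apply/ffunP => w; have wX : val w \in X := fsubsetP WX _ (valP w).
by rewrite (resE _ (x := [` wX])) // (glueEl _ _ (w := w)).
Qed.

Lemma res_glue_r (i : basis W) (c : basis D) : res D (glue X i c) = c.
Proof.
apply/ffunP => y; have := valP y; rewrite in_fsetD => /andP [yW yX].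
by rewrite (resE _ (x := [` yX])) // (glueEr _ _ (y := y)).
Qed.

Lemma sum_basis_glue (Z : nmodType) (F : basis X -> Z) :
  \sum_(k : basis X) F k = \sum_(w : basis W) \sum_(d : basis D) F (glue X w d).
Proof.
rewrite pair_big /= (reindex (fun p : basis W * basis D => glue X p.1 p.2)) //=.
apply: onW_bij; exists (fun k => (res W k, res D k)).
  by case=> i c /=; rewrite res_glue_l res_glue_r.
by move=> k /=; rewrite glue_res.
Qed.

Lemma mulT_extO (A B : Op R W) : mulT (ext A) (ext B) = ext (mulT A B).
Proof.
apply: funext => b; apply: funext => b'; rewrite /mulT /extO sum_basis_glue.
under eq_bigr do under eq_bigr do rewrite res_glue_l res_glue_r.
rewrite mulr_suml; apply: eq_bigr => w _.
rewrite -(sum_deltal (res D b) (fun d => A (res W b) w * B w (res W b') * (d == res D b')%:R)).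
by apply: eq_bigr => d _; rewrite [(res D b == d)]eq_sym; ring.
Qed.

Lemma projT_extO (P : Op R W) : projT P -> projT (ext P).
Proof. by case=> PP Padj; split; rewrite ?mulT_extO ?adjT_extO ?PP ?Padj. Qed.

End Registers.

Section ScaledSkip.
Local Open Scope fset_scope.
Variables (R : realType) (V : {fset nat}).
Local Notation C := R[i].
Local Notation I W := (@idT R (basis W)).
Implicit Types (a c : C) (W X : {fset nat}).

Definition scaled_skip c : SO R V -> Prop := fun E => E = scaleT c.

Lemma cconv_const_eq (x l : C) : cconv (fun _ => x) l -> l = x.
Proof.
move=> xl; apply/eqP; rewrite eq_sym -subr_eq0; apply: contraT => neq0.
have : 0 < `|x - l| by rewrite normr_gt0.
rewrite normc_def ltcE /= => /andP [_ /xl [N /(_ N (leqnn N))]].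
by rewrite normc_def ltxx.
Qed.

Lemma NProg_scaled_skip c : 0 <= c <= 1 -> NProg (scaled_skip c).
Proof.
case/andP=> c_ge0 c_le1; split.
- by exists (scaleT c).
- move=> _ ->; split.
  + by move=> a A B; apply: funext => i; apply: funext => j; rewrite /scaleT; ring.
  + move=> n rho hr.
    have -> : amplSO (scaleT c) rho = scaleT c rho.
      by apply: funext => -[p1 p2]; apply: funext => -[q1 q2].
    exact: psdTZ.
  + by move=> rho hr; rewrite trTZ; exact: ler_piMl (trT_psd_ge0 hr) c_le1.
- move=> _ _ p -> -> _; apply: funext => A; apply: funext => i; apply: funext => j.
  by rewrite /scaleT rmorphB rmorph1; ring.
- move=> En E En_c conv; apply: funext => A; apply: funext => i; apply: funext => j.
  by apply: cconv_const_eq; have := conv A i j; under eq_fun do rewrite En_c.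
Qed.

Lemma effect_scalar W a : 0 <= a <= 1 -> effect (scaleT a (I W)).
Proof.
case/andP=> a_ge0 a_le1; split; first by apply: psdTZ => //; exact: psdT1.
have -> : (fun i j => I W i j - scaleT a (I W) i j) = scaleT (1 - a) (I W).
  by apply: funext => i; apply: funext => j; rewrite /scaleT; ring.
by apply: psdTZ; [rewrite subr_ge0 | exact: psdT1].
Qed.

Lemma projector_effect W (P : Op R W) : projector P -> effect P.
Proof. by move=> hP; split; apply: projT_psd => //; exact: projT_compl. Qed.

Lemma le_Te_le_Tp (E F : SO R V -> Prop) : le_Te E F -> le_Tp E F.
Proof. by move=> EF W M N /projector_effect hM /projector_effect hN; exact: EF. Qed.

Lemma le_Pe_le_Pp (E F : SO R V -> Prop) : le_Pe E F -> le_Pp E F.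
Proof. by move=> EF W M N /projector_effect hM /projector_effect hN; exact: EF. Qed.

Lemma trT_extO_scalar W X a (rho : Op R X) :
  trT (mulT (@extO R W X (scaleT a (I W))) rho) = a * trT rho.
Proof. by rewrite extOZ extO1 mulTZl mul1T trTZ. Qed.

Lemma sat_tot_scalar c a b :
  sat_tot (scaled_skip c) (scaleT a (I fset0)) (scaleT b (I fset0)) <-> a <= c * b.
Proof.
split=> [sat | le_acb X _ rho [hr _] _ ->].
  have VV : V `|` fset0 `<=` V by rewrite fsetU0.
  have := sat V VV _ (pdoT_ketbra R ([ffun=> false] : basis V)) _ erefl.
  by rewrite !trT_extO_scalar extSO_scaleT trTZ trT_ketbra !mulr1 mulrC.
rewrite !trT_extO_scalar extSO_scaleT trTZ mulrA [b * c]mulrC.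
exact: ler_wpM2r (trT_psd_ge0 hr) _ _ le_acb.
Qed.

Lemma sat_par_scalar c a b :
  sat_par (scaled_skip c) (scaleT a (I fset0)) (scaleT b (I fset0)) <->
  a <= c * b + 1 - c.
Proof.
split=> [sat | le_a X _ rho [hr _] _ ->].
  have VV : V `|` fset0 `<=` V by rewrite fsetU0.
  have := sat V VV _ (pdoT_ketbra R ([ffun=> false] : basis V)) _ erefl.
  by rewrite !trT_extO_scalar extSO_scaleT trTZ trT_ketbra !mulr1 mulrC.
rewrite !trT_extO_scalar extSO_scaleT trTZ.
have -> : b * (c * trT rho) + trT rho - c * trT rho = (c * b + 1 - c) * trT rho.
  by ring.
exact: ler_wpM2r (trT_psd_ge0 hr) _ _ le_a.
Qed.

Lemma le_Tp_scaled_skip0 c : 0 <= c < 1 -> le_Tp (scaled_skip c) (scaled_skip 0).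
Proof.
case/andP=> c_ge0 c_lt1 W M N hM hN hS X VWX rho hr _ ->.
have /andP [_ WX] : (V `<=` X) && (W `<=` X) by rewrite -fsubUset.
have hP := projT_extO WX hM; have hQ := projT_extO WX hN.
set P := @extO R W X M in hP *; set Q := @extO R W X N in hQ *.
have [PP _] := hP.
rewrite extSO_scaleT mulTZr trTZ mul0r.
have := hS X VWX _ (pdoT_sandwich hP hr) _ erefl.
rewrite extSO_scaleT mulTZr trTZ -mulTA PP trT_sandwich // => tr_le_cQ.
have := projT_trT_le hQ (psdT_sandwich hP hr.1); rewrite trT_sandwich // => trQ_le.
have : (1 - c) * trT (mulT P rho) <= 0.
  rewrite mulrBl mul1r subr_le0; apply: le_trans tr_le_cQ _.
  exact: ler_wpM2l c_ge0 _ _ trQ_le.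
by rewrite pmulr_rle0 // subr_gt0.
Qed.

Lemma not_le_Te_scaled_skip0 c : 0 < c <= 1 ->
  ~ le_Te (scaled_skip c) (scaled_skip 0).
Proof.
move=> /andP [c_gt0 c_le1] le_c0.
have /sat_tot_scalar : sat_tot (scaled_skip 0) (scaleT c (I fset0)) (scaleT 1 (I fset0)).
  apply: le_c0; first by apply: effect_scalar; rewrite ltW.
    by apply: effect_scalar; rewrite ler01 /=.
  by apply/sat_tot_scalar; rewrite mulr1.
by rewrite mul0r => /(lt_le_trans c_gt0); rewrite ltxx.
Qed.

Lemma le_Pp_scaled_skip1 c : 0 < c -> le_Pp (scaled_skip c) (scaled_skip 1).
Proof.
move=> c_gt0 W M N hM hN hS X VWX rho hr _ ->.
have /andP [_ WX] : (V `<=` X) && (W `<=` X) by rewrite -fsubUset.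
have hP := projT_extO WX hM; have hQ := projT_extO WX hN.
rewrite extSO_scaleT scale1T addrK.
apply: (projT_trT_mono hP hQ _ hr.1); apply: (projT_absorb hP hQ) => b.
have [PP _] := hP.
have := hS X VWX _ (pdoT_sandwich hP (pdoT_ketbra R b)) _ erefl.
rewrite extSO_scaleT mulTZr !trTZ -mulTA PP.
set t := trT _; set q := trT _; rewrite -subr_ge0 => t_le.
have : 0 <= c * (q - t) by move: t_le; congr (_ <= _); ring.
by rewrite pmulr_rge0 // subr_ge0.
Qed.

Lemma not_le_Pe_scaled_skip1 c : 0 <= c < 1 ->
  ~ le_Pe (scaled_skip c) (scaled_skip 1).
Proof.
move=> /andP [c_ge0 c_lt1] le_c1.
have /sat_par_scalar : sat_par (scaled_skip 1) (scaleT (1 - c) (I fset0)) (scaleT 0 (I fset0)).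
  apply: le_c1; first by apply: effect_scalar; rewrite subr_ge0 ltW //= gerBl.
    by apply: effect_scalar; rewrite lexx ler01.
  by apply/sat_par_scalar; rewrite mulr0 add0r.
by rewrite mulr0 add0r subrr subr_le0 => /(lt_le_trans c_lt1); rewrite ltxx.
Qed.

End ScaledSkip.

Theorem proposition5p9 (R : realType) :
  (forall (V : {fset nat}) (E F : SO R V -> Prop), NProg E -> NProg F ->
     (le_Te E F -> le_Tp E F) /\ (le_Pe E F -> le_Pp E F)) /\
  (exists (V : {fset nat}) (E F : SO R V -> Prop),
     [/\ NProg E, NProg F, le_Tp E F & ~ le_Te E F]) /\
  (exists (V : {fset nat}) (E F : SO R V -> Prop),
     [/\ NProg E, NProg F, le_Pp E F & ~ le_Pe E F]).
Proof.
pose h : R[i] := 2^-1.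
have h_gt0 : 0 < h by rewrite invr_gt0 ltr0n.
have h_lt1 : h < 1 by rewrite invf_lt1 ?ltr0n ?ltr1n.
split; first by move=> V E F _ _; split; [exact: le_Te_le_Tp | exact: le_Pe_le_Pp].
have NProg_h := @NProg_scaled_skip R fset0%fset h.
split; exists fset0%fset, (@scaled_skip R fset0%fset h).
- exists (@scaled_skip R fset0%fset 0); split.
  + by apply: NProg_h; rewrite !ltW.
  + by apply: NProg_scaled_skip; rewrite lexx ler01.
  + by apply: le_Tp_scaled_skip0; rewrite ltW.
  + by apply: not_le_Te_scaled_skip0; rewrite h_gt0 ltW.
- exists (@scaled_skip R fset0%fset 1); split.
  + by apply: NProg_h; rewrite !ltW.
  + by apply: NProg_scaled_skip; rewrite ler01 lexx.
  + exact: le_Pp_scaled_skip1.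
  + by apply: not_le_Pe_scaled_skip1; rewrite ltW.
Qed.
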